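(* Let $L$ be a positive definite lattice with $\operatorname{rank} L\geq 4$. Then $\mathcal{E}(\operatorname{gen} L)=\mathbb{N}\setminus Q(\operatorname{gen} L)$ is a finite union of admissible arithmetic progressions.
   Context: A lattice is a finitely generated $\mathbb{Z}$-submodule $L$ of a finite-dimensional quadratic space $(V,Q)$ over $\mathbb{Q}$, with associated symmetric bilinear form $B$ satisfying $Q(v)=B(v,v)$; it is assumed throughout that the scale of $L$ (the fractional ideal generated by $\{B(x,y):x,y\in L\}$) equals $\mathbb{Z}$. $L$ is positive definite if $Q(v)>0$ for all nonzero $v\in L$. $\mathbb{N}$ is the set of positive integers. For a prime $p$, $L_p=\mathbb{Z}_p\otimes L$ is the localization, and $Q(L_p)=\{Q(v):v\in L_p\}\subseteq\mathbb{Z}_p$. $\operatorname{gen} L$ is the genus of $L$, and $Q(\operatorname{gen} L)=\{a\in\mathbb{Z}: a\in Q(K)\text{ for some }K\in\operatorname{gen}L\}$; equivalently, $a\in Q(\operatorname{gen}L)$ iff $a\in Q(L_p)$ for all primes $p$. For positive integers $a<m$, $\mathcal{A}_{a,m}=\{a+mx : x\in\mathbb{N}\cup\{0\}\}$, and $\mathcal{A}_{a,m}$ is admissible if $\operatorname{ord}_p a<\operatorname{ord}_p m$ for every prime $p\mid m$. *)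

From mathcomp Require Import all_boot all_order all_algebra.
Set Implicit Arguments. Unset Strict Implicit. Unset Printing Implicit Defensive.
Import Order.TTheory GRing.Theory Num.Theory.
Local Open Scope ring_scope.

(* A lattice L of rank n is represented by the Gram matrix G of a Z-basis:
   G i j = B(e_i, e_j), so Q(sum x_i e_i) = x^T G x. *)
Definition qform (n : nat) (G : 'M[int]_n) (x : 'cV[int]_n) : int :=
  (x^T *m G *m x) 0 0.

Definition symmetric_gram (n : nat) (G : 'M[int]_n) : Prop := G^T = G.

Definition pos_def (n : nat) (G : 'M[int]_n) : Prop :=
  forall x : 'cV[int]_n, x != 0 -> 0 < qform G x.

(* scale of L equals Z: the ideal generated by the B(e_i,e_j) is Z,
   i.e. the only natural number dividing all Gram entries is 1 *)
Definition scale_one (n : nat) (G : 'M[int]_n) : Prop :=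
  forall d : nat, (forall i j, (d %| `|G i j|)%N) -> d = 1%N.

(* a \in Q(L_p), where L_p = Z_p (x) L.  Since Z^n is dense in Z_p^n and
   Q(Z_p^n) is compact, this holds iff a is represented by L modulo every
   power of p. *)
Definition loc_repr (n : nat) (G : 'M[int]_n) (p : nat) (a : int) : Prop :=
  forall k : nat, exists x : 'cV[int]_n,
    (qform G x = a %[mod ((p ^ k)%N)%:Z])%Z.

(* a \in Q(gen L)  iff  a \in Q(L_p) for all primes p *)
Definition in_Q_gen (n : nat) (G : 'M[int]_n) (a : int) : Prop :=
  forall p : nat, prime p -> loc_repr G p a.

Definition in_AP (a m : nat) (b : nat) : Prop :=
  exists x : nat, b = (a + m * x)%N.

Definition admissible (a m : nat) : Prop :=
  forall p : nat, prime p -> (p %| m)%N -> (logn p a < logn p m)%N.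

From mathcomp Require Import all_boot all_order all_algebra.
From mathcomp Require Import zify ring.
From Stdlib Require Import Classical.
Set Implicit Arguments. Unset Strict Implicit. Unset Printing Implicit Defensive.
Import Order.TTheory GRing.Theory Num.Theory.
Local Open Scope ring_scope.

(* Gram-Schmidt without division yields four pairwise orthogonal vectors of L
   with norms d_0, ..., d_3, so Q(L_p) contains every p-adic value of the
   diagonal form d_0 x_0^2 + ... + d_3 x_3^2.  When p does not divide
   2 d_0 d_1 d_2, a pigeonhole count mod p and Hensel's lemma show that these
   three unit coefficients represent every p-adic integer.  For each of the
   finitely many remaining primes the diagonal form represents every multiple
   of some p^M, and Hensel's lemma, with the gradient of Q controlled through
   the adjugate of the Gram matrix, shows that whether b lies in Q(L_p) only
   depends on b modulo p^(M + 2 ord_p(det L) + 4).  So for N large the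
   exceptional set is the union of the progressions r + p^N x with p among
   these primes, 0 < r < p^N and r not in Q(L_p); they are admissible because
   the multiples of p^N lie in Q(L_p). *)

(** * p-adic representation and Hensel lifting *)

Definition padic_rep (V : Type) (q : V -> int) (p : nat) (c : int) : Prop :=
  forall k, exists v, (p%:Z ^+ k %| q v - c)%Z.

Lemma PoszX (p k : nat) : ((p ^ k)%N)%:Z = p%:Z ^+ k.
Proof. by elim: k => [|k IH]; rewrite ?expnS ?exprS // PoszM IH. Qed.

Lemma loc_reprE n (G : 'M[int]_n) p a : loc_repr G p a <-> padic_rep (qform G) p a.
Proof.
split=> h k; have [x hx] := h k; exists x.
  by move/eqP: hx; rewrite eqz_mod_dvd PoszX.
by apply/eqP; rewrite eqz_mod_dvd PoszX.
Qed.

Lemma padic_rep0 V (q : V -> int) p (v0 : V) : q v0 = 0 -> padic_rep q p 0.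
Proof. by move=> h k; exists v0; rewrite h subr0 rpred0. Qed.

Lemma prime_ndvdzM p (a b : int) : prime p ->
  ~~ (p%:Z %| a)%Z -> ~~ (p%:Z %| b)%Z -> ~~ (p%:Z %| a * b)%Z.
Proof. by move=> pp; rewrite !dvdzE abszM Euclid_dvdM // => /negbTE -> /negbTE ->. Qed.

Lemma odd_prime_ndvdz2 p (a : int) : prime p -> odd p ->
  ~~ (p%:Z %| a)%Z -> ~~ (p%:Z %| a *+ 2)%Z.
Proof.
move=> pp po na; rewrite -mulr_natr; apply: prime_ndvdzM => //.
by rewrite dvdzE /= dvdn_prime2 //; apply: contraTneq po => ->.
Qed.

Lemma dvdz_pfactorE p k (a : int) : prime p -> a != 0 ->
  (p%:Z ^+ k %| a)%Z = (k <= logn p `|a|)%N.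
Proof. by move=> pp a0; rewrite -PoszX dvdzE /= pfactor_dvdn // absz_gt0. Qed.

Lemma pfactorz_decomp p (a : int) (v := logn p `|a|) : prime p -> a != 0 ->
  a = p%:Z ^+ v * (a %/ p%:Z ^+ v)%Z /\ ~~ (p%:Z %| (a %/ p%:Z ^+ v)%Z)%Z.
Proof.
move=> pp a0; have := dvdz_pfactorE v pp a0; rewrite leqnn => /dvdzP [u eu].
have pv0 : p%:Z ^+ v != 0 by rewrite expf_neq0 // -lt0n prime_gt0.
rewrite {2 3}eu mulzK // mulrC; split=> //.
apply/negP => /dvdzP [w ew].
have := dvdz_pfactorE v.+1 pp a0; rewrite ltnn => /negP; apply.
by rewrite eu ew exprSr mulrAC dvdz_mul ?dvdz_mull.
Qed.

Lemma logn_two_le1 p : prime p -> (logn p 2 <= 1)%N.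
Proof.
move=> pp; rewrite leqNgt; apply/negP => h.
have /dvdn_leq : (p ^ 2 %| 2)%N by rewrite pfactor_dvdn.
by have := prime_gt1 pp; nia.
Qed.

Lemma linear_solvable_modp p (A B : int) : prime p -> ~~ (p%:Z %| B)%Z ->
  exists w, (p%:Z %| A + B * w)%Z.
Proof.
move=> pp nd; have [u [v Huv]] := Bezoutz B p.
have /eqP g1 : coprimez B p by rewrite coprimezE coprime_sym prime_coprime.
rewrite g1 in Huv; exists (- (A * u)); apply/dvdzP; exists (A * v).
have -> : A + B * - (A * u) = A * (1 - u * B) by ring.
by rewrite -Huv; ring.
Qed.

Lemma quadratic_hensel (p t : nat) (a b g : int) : prime p ->
  (p%:Z ^+ t %| b)%Z -> ~~ (p%:Z ^+ t.+1 %| b)%Z -> (p%:Z ^+ (2 * t).+1 %| a)%Z ->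
  forall m, exists h, (p%:Z ^+ ((2 * t).+1 + m) %| a + b * h + g * h ^+ 2)%Z.
Proof.
move=> pp dtb ndb da.
suff lift m : exists h, (p%:Z ^+ t.+1 %| h)%Z /\
    (p%:Z ^+ ((2 * t).+1 + m) %| a + b * h + g * h ^+ 2)%Z.
  by move=> m; have [h [_ ?]] := lift m; exists h.
elim: m => [|m [h [dh dm]]].
  by exists 0; rewrite rpred0 addn0 mulr0 addr0 expr0n /= mulr0 addr0.
have db2 : (p%:Z ^+ t %| b + g * h *+ 2)%Z.
  rewrite rpredD // -mulr_natr; apply: dvdz_mulr; apply: dvdz_mull.
  by apply: dvdz_trans dh; rewrite dvdz_exp2l.
have [B eB] := dvdzP db2.
have [A eA] := dvdzP dm.
(* the derivative b + 2 g h still has valuation exactly t *)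
have nB : ~~ (p%:Z %| B)%Z.
  apply/negP => /dvdzP [c ec]; move/negP: ndb; apply.
  have -> : b = (b + g * h *+ 2) - g * h *+ 2 by ring.
  rewrite rpredB // ?eB ?ec.
    by apply/dvdzP; exists c; rewrite exprS; ring.
  rewrite -mulr_natr; apply: dvdz_mulr; exact: dvdz_mull.
have [w ew] := linear_solvable_modp A pp nB.
set u := p%:Z ^+ (t.+1 + m) * w.
exists (h + u); split.
  by rewrite rpredD // dvdz_mulr // dvdz_exp2l // leq_addr.
have -> : a + b * (h + u) + g * (h + u) ^+ 2 =
    (a + b * h + g * h ^+ 2) + (b + g * h *+ 2) * u + g * u ^+ 2 by ring.
rewrite eA eB.
have -> : A * p%:Z ^+ ((2 * t).+1 + m) + B * p%:Z ^+ t * u + g * u ^+ 2 =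
   (A + B * w) * p%:Z ^+ ((2 * t).+1 + m) + (g * w ^+ 2 * p%:Z ^+ m) * p%:Z ^+ ((2 * t).+2 + m).
  rewrite /u !exprD !exprS mul2n -addnn exprD; ring.
rewrite rpredD //.
  by rewrite addnS exprSr mulrC dvdz_mul.
by apply: dvdz_mull; rewrite dvdz_exp2l // addnS.
Qed.

Lemma padic_rep_line V (q : V -> int) (f : int -> V) p t (a b g c : int) : prime p ->
  (forall h, q (f h) = a + b * h + g * h ^+ 2) ->
  (p%:Z ^+ t %| b)%Z -> ~~ (p%:Z ^+ t.+1 %| b)%Z -> (p%:Z ^+ (2 * t).+1 %| a - c)%Z ->
  padic_rep q p c.
Proof.
move=> pp qf dtb ndb da k.
have [h hh] := quadratic_hensel g pp dtb ndb da k.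
exists (f h); rewrite qf.
have -> : a + b * h + g * h ^+ 2 - c = a - c + b * h + g * h ^+ 2 by ring.
by apply: dvdz_trans hh; rewrite dvdz_exp2l // addnC leq_addr.
Qed.

(** * Diagonal quaternary forms *)

Definition diag4 (d y : nat -> int) : int := \sum_(i < 4) d i * y i ^+ 2.

Lemma diag4E d y :
  diag4 d y = d 0%N * y 0%N ^+ 2 + d 1%N * y 1%N ^+ 2 + d 2%N * y 2%N ^+ 2 + d 3%N * y 3%N ^+ 2.
Proof. by rewrite /diag4 !big_ord_recl big_ord0 addr0 /= !addrA. Qed.

Lemma padic_rep_diag4_scale (d d' s : nat -> int) (M c : int) p :
  (forall i, (i < 4)%N -> d i * s i ^+ 2 = M * d' i) ->
  padic_rep (diag4 d') p c -> padic_rep (diag4 d) p (M * c).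
Proof.
move=> hd R k; have [z hz] := R k.
exists (fun i => s i * z i).
have -> : diag4 d (fun i => s i * z i) = M * diag4 d' z.
  rewrite /diag4 big_distrr /=; apply: eq_bigr => i _.
  transitivity (d i * s i ^+ 2 * z i ^+ 2); first by ring.
  by rewrite hd //; ring.
by rewrite -mulrBr; apply: dvdz_mull.
Qed.

Lemma padic_rep_diag4_sqr d p c (l : int) :
  padic_rep (diag4 d) p c -> padic_rep (diag4 d) p (l ^+ 2 * c).
Proof. by apply: padic_rep_diag4_scale => i _; apply: mulrC. Qed.

Definition shift_at (y : nat -> int) (i : nat) (h : int) : nat -> int :=
  fun j => if j == i then y i + h else y j.

Lemma diag4_shift_at d y i h : (i < 4)%N ->
  diag4 d (shift_at y i h) = diag4 d y + (d i * y i *+ 2) * h + d i * h ^+ 2.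
Proof.
move=> hi; rewrite /diag4 (bigD1 (Ordinal hi)) //= [in RHS](bigD1 (Ordinal hi)) //=.
rewrite /shift_at eqxx.
under eq_bigr => j hj do rewrite ifN ?(inj_eq val_inj) //.
ring.
Qed.

Lemma padic_rep_diag4_hensel p t d y i c : prime p -> (i < 4)%N ->
  (p%:Z ^+ t %| d i * y i *+ 2)%Z -> ~~ (p%:Z ^+ t.+1 %| d i * y i *+ 2)%Z ->
  (p%:Z ^+ (2 * t).+1 %| diag4 d y - c)%Z -> padic_rep (diag4 d) p c.
Proof.
move=> pp hi; apply: (padic_rep_line (f := shift_at y i) (g := d i) pp).
by move=> h; apply: diag4_shift_at.
Qed.

Section OddPrime.

Variables (p : nat) (pp : prime p) (podd : odd p).

Let p_gt0 : (0 : int) < p%:Z. Proof. by rewrite ltz_nat prime_gt0. Qed.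

Lemma residue_subproof (z : int) : (`|(z %% p%:Z)%Z|%N < p)%N.
Proof. by rewrite -ltz_nat gez0_abs ?modz_ge0 ?ltz_pmod ?lt0r_neq0. Qed.

Definition residue (z : int) : 'I_p := Ordinal (residue_subproof z).

Lemma residue_eq z z' : residue z = residue z' -> (p%:Z %| z - z')%Z.
Proof.
move=> /(congr1 (fun x : 'I_p => (nat_of_ord x)%:Z)) /=.
rewrite !gez0_abs ?modz_ge0 ?lt0r_neq0 // => e.
by rewrite -eqz_mod_dvd; apply/eqP.
Qed.

Lemma half_sqr_inj (a : int) (x y : 'I_(p./2).+1) : ~~ (p%:Z %| a)%Z ->
  (p%:Z %| a * (x%:Z) ^+ 2 - a * (y%:Z) ^+ 2)%Z -> x = y.
Proof.
move=> na.
have -> : a * (x%:Z) ^+ 2 - a * (y%:Z) ^+ 2 = a * ((x%:Z - y%:Z) * (x%:Z + y%:Z)) by ring.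
rewrite Gauss_dvdzr ?coprimezE ?prime_coprime // dvdzE abszM Euclid_dvdM //.
have hx := ltn_ord x; have hy := ltn_ord y.
have hp := odd_double_half p; rewrite podd -muln2 in hp.
move=> /orP [] /dvdn_leq; case: posnP => [e _|pos /(_ isT) hd];
  apply: val_inj => /=; lia.
Qed.

Lemma binary_form_onto_modp (a1 a2 c : int) : ~~ (p%:Z %| a1)%Z -> ~~ (p%:Z %| a2)%Z ->
  exists x y : int, (p%:Z %| a1 * x ^+ 2 + a2 * y ^+ 2 - c)%Z.
Proof.
move=> n1 n2.
pose fA (x : 'I_(p./2).+1) := residue (a1 * (x%:Z) ^+ 2).
pose fB (x : 'I_(p./2).+1) := residue (c - a2 * (x%:Z) ^+ 2).
have iA : injective fA by move=> x y /residue_eq; apply: half_sqr_inj.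
have iB : injective fB.
  move=> x y /residue_eq h; apply: (half_sqr_inj n2).
  have -> : a2 * (x%:Z) ^+ 2 - a2 * (y%:Z) ^+ 2 =
    - ((c - a2 * (x%:Z) ^+ 2) - (c - a2 * (y%:Z) ^+ 2)) by ring.
  by rewrite rpredN.
have cA : #|fA @: setT| = (p./2).+1 by rewrite card_imset // cardsT card_ord.
have cB : #|fB @: setT| = (p./2).+1 by rewrite card_imset // cardsT card_ord.
have cU := cardsUI (fA @: setT) (fB @: setT).
have cM : (#|fA @: setT :|: fB @: setT| <= p)%N.
  by rewrite -[X in (_ <= X)%N]card_ord max_card.
have hp := odd_double_half p; rewrite podd -muln2 in hp.
(* two sets of (p + 1) / 2 residues mod p must meet *)
have : (0 < #|fA @: setT :&: fB @: setT|)%N by lia.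
rewrite card_gt0 => /set0Pn [r]; rewrite inE => /andP [] /imsetP [x _ ex] /imsetP [y _ ey].
exists x%:Z, y%:Z.
have -> : a1 * (x%:Z) ^+ 2 + a2 * (y%:Z) ^+ 2 - c =
  a1 * (x%:Z) ^+ 2 - (c - a2 * (y%:Z) ^+ 2) by ring.
exact: residue_eq (etrans (esym ex) ey).
Qed.

End OddPrime.

Definition coord3 (i j l : nat) (x y z : int) : nat -> int :=
  fun m => if m == i then x else if m == j then y else if m == l then z else 0.

Lemma diag4_coord3 d i j l x y z : (i < 4)%N -> (j < 4)%N -> (l < 4)%N ->
  i != j -> i != l -> j != l ->
  diag4 d (coord3 i j l x y z) = d i * x ^+ 2 + d j * y ^+ 2 + d l * z ^+ 2.
Proof.
rewrite diag4E /coord3.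
by case: i => [|[|[|[|i]]]] //; case: j => [|[|[|[|j]]]] //;
  case: l => [|[|[|[|l]]]] //= *; ring.
Qed.

Lemma diag4_coord2 d i j x y : (i < 4)%N -> (j < 4)%N -> i != j ->
  diag4 d (coord3 i j i x y 0) = d i * x ^+ 2 + d j * y ^+ 2.
Proof.
rewrite diag4E /coord3.
by case: i => [|[|[|[|i]]]] //; case: j => [|[|[|[|j]]]] //= *; ring.
Qed.

Lemma coord3_1 i j l x y z : coord3 i j l x y z i = x.
Proof. by rewrite /coord3 eqxx. Qed.

Lemma coord3_2 i j l x y z : i != j -> coord3 i j l x y z j = y.
Proof. by rewrite /coord3 eq_sym => /negbTE ->; rewrite eqxx. Qed.

Lemma coord3_3 i j l x y z : i != l -> j != l -> coord3 i j l x y z l = z.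
Proof. by rewrite /coord3 eq_sym => /negbTE ->; rewrite eq_sym => /negbTE ->; rewrite eqxx. Qed.

Section OddPrimeDiag.

Variables (p : nat) (pp : prime p) (podd : odd p) (d : nat -> int).

Lemma padic_rep_diag4_ternary i j l c :
  (i < 4)%N -> (j < 4)%N -> (l < 4)%N -> i != j -> i != l -> j != l ->
  ~~ (p%:Z %| d i)%Z -> ~~ (p%:Z %| d j)%Z -> ~~ (p%:Z %| d l)%Z ->
  padic_rep (diag4 d) p c.
Proof.
move=> hi hj hl ij il jl ni nj nl.
have [x [y hxy]] := binary_form_onto_modp pp podd (c - d l) ni nj.
apply: (@padic_rep_diag4_hensel p 0 d (coord3 i j l x y 1) l) => //.
- by rewrite coord3_3 // mulr1 expr1 odd_prime_ndvdz2.
- rewrite expr1 diag4_coord3 // expr1n mulr1.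
  by have -> : d i * x ^+ 2 + d j * y ^+ 2 + d l - c =
    d i * x ^+ 2 + d j * y ^+ 2 - (c - d l) by ring.
Qed.

Lemma padic_rep_diag4_binary i j c : (i < 4)%N -> (j < 4)%N -> i != j ->
  ~~ (p%:Z %| d i)%Z -> ~~ (p%:Z %| d j)%Z -> ~~ (p%:Z %| c)%Z ->
  padic_rep (diag4 d) p c.
Proof.
move=> hi hj ij ni nj nc.
have [x [y hxy]] := binary_form_onto_modp pp podd c ni nj.
have hq : (p%:Z ^+ (2 * 0).+1 %| diag4 d (coord3 i j i x y 0) - c)%Z.
  by rewrite diag4_coord2.
(* p cannot divide both x and y, since it does not divide c *)
have [px | npx] := boolP (p%:Z %| x)%Z.
  have npy : ~~ (p%:Z %| y)%Z.
    apply: contra nc => py.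
    have -> : c = d i * x ^+ 2 + d j * y ^+ 2 - (d i * x ^+ 2 + d j * y ^+ 2 - c) by ring.
    by rewrite rpredB // rpredD // dvdz_mull // expr2 dvdz_mull.
  apply: (padic_rep_diag4_hensel (i := j) pp hj _ _ hq); first by rewrite dvd1z.
  by rewrite coord3_2 // expr1 odd_prime_ndvdz2 // prime_ndvdzM.
apply: (padic_rep_diag4_hensel (i := i) pp hi _ _ hq); first by rewrite dvd1z.
by rewrite coord3_1 // expr1 odd_prime_ndvdz2 // prime_ndvdzM.
Qed.

End OddPrimeDiag.

Definition idx4 (P : pred nat) : seq nat := [seq i <- iota 0 4 | P i].

Lemma idx4P (P : pred nat) k : (k < size (idx4 P))%N ->
  (nth 0%N (idx4 P) k < 4)%N /\ P (nth 0%N (idx4 P) k).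
Proof.
move=> hk; have := mem_nth 0%N hk; rewrite mem_filter mem_iota => /andP [-> h].
by split; move: h; rewrite add0n.
Qed.

Lemma idx4_neq (P : pred nat) k k' : (k < size (idx4 P))%N -> (k' < size (idx4 P))%N ->
  k != k' -> nth 0%N (idx4 P) k != nth 0%N (idx4 P) k'.
Proof. by move=> h1 h2 nk; rewrite nth_uniq // filter_uniq // iota_uniq. Qed.

Lemma size_idx4C (P : pred nat) : (size (idx4 P) + size (idx4 (predC P)) = 4)%N.
Proof. by rewrite !size_filter (count_predC P) size_iota. Qed.

Lemma idx4_parity (P : pred nat) : exists b : bool, (2 <= size (idx4 (fun i => P i == b)))%N.
Proof.
have := size_idx4C P; have [h _ | h] := leqP 2 (size (idx4 P)).
  by exists true; rewrite /idx4 (eq_filter (a2 := P)) // => i; rewrite eqb_id.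
exists false; rewrite /idx4 (eq_filter (a2 := predC P)) => [|i]; last by rewrite eqbF_neg.
by change (1 < size (idx4 (predC P)))%N; lia.
Qed.

(* Rescaling the variables turns any diag4 d into p ^ E times a form whose
   coefficients p ^ f i * u i have p-adic valuation 0 or 1. *)
Definition pscaled (p : nat) (f : nat -> bool) (u : nat -> int) : nat -> int :=
  fun i => p%:Z ^+ f i * u i.

Lemma padic_rep_pscaled_odd p f u tau : prime p -> odd p ->
  (forall i, (i < 4)%N -> ~~ (p%:Z %| u i)%Z) ->
  (2 <= size (idx4 (predC f)))%N -> ~~ (p%:Z %| tau)%Z ->
  padic_rep (diag4 (pscaled p f u)) p (p%:Z ^+ 2 * tau) /\
  padic_rep (diag4 (pscaled p f u)) p (p%:Z ^+ 3 * tau).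
Proof.
move=> pp po hu hA ht.
set A := idx4 (predC f).
have [i0 fi0] := idx4P (ltnW hA).
have [i1 fi1] := idx4P hA.
have n01 := idx4_neq (ltnW hA) hA (isT : 0%N != 1%N).
have unitA i : (i < 4)%N -> ~~ f i -> ~~ (p%:Z %| pscaled p f u i)%Z.
  by move=> hi /negbTE hf; rewrite /pscaled hf mul1r hu.
have R1 : padic_rep (diag4 (pscaled p f u)) p tau.
  by apply: (padic_rep_diag4_binary pp po (i := nth 0%N A 0) (j := nth 0%N A 1)); rewrite ?unitA.
split; first exact: padic_rep_diag4_sqr.
have [h3 | h3] := ltnP 2 (size A).
  have [i2 fi2] := idx4P h3.
  have n02 := idx4_neq (ltnW hA) h3 (isT : 0%N != 2%N).
  have n12 := idx4_neq hA h3 (isT : 1%N != 2%N).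
  apply: (padic_rep_diag4_ternary pp po (i := nth 0%N A 0) (j := nth 0%N A 1) (l := nth 0%N A 2));
    by rewrite ?unitA.
(* exactly two unit coefficients: represent p * tau with the other two, scaled down by p *)
have hB : (2 <= size (idx4 f))%N by have := size_idx4C f; rewrite -/A; lia.
have [k0 fk0] := idx4P (ltnW hB).
have [k1 fk1] := idx4P hB.
have m01 := idx4_neq (ltnW hB) hB (isT : 0%N != 1%N).
pose d' i := if f i then u i else p%:Z * u i.
have R2 : padic_rep (diag4 d') p tau.
  apply: (padic_rep_diag4_binary pp po (i := nth 0%N (idx4 f) 0) (j := nth 0%N (idx4 f) 1)) => //.
  1,2: by rewrite /d' ?fk0 ?fk1 hu.
have R3 : padic_rep (diag4 (pscaled p f u)) p (p%:Z * tau).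
  apply: (padic_rep_diag4_scale (s := fun i => if f i then 1 else p%:Z)) R2 => i _.
  by rewrite /pscaled /d'; case: (f i); rewrite ?expr1 ?expr0; ring.
by have := padic_rep_diag4_sqr p%:Z R3; rewrite mulrA -exprSr.
Qed.

(** * The prime 2 *)

(* A solution mod 8 in which some unit coefficient meets an odd coordinate
   lifts by Hensel (with t = 1).  Its value mod 8 depends only on the f i, on
   the u i mod 8 and on the y i ^ 2 mod 8, which lie in [0; 1; 4].  Whenever
   at least two f i vanish, [covers8_all] checks by computation that these
   values include every odd class, and either every class 2 * odd or 0. *)
Definition odd_residues8 : seq nat := [:: 1%N; 3%N; 5%N; 7%N].
Definition squares8 : seq nat := [:: 0%N; 1%N; 4%N].
Definition square_tuples8 : seq (seq nat) :=
  iter 4 (fun ts => [seq a :: t | a <- squares8, t <- ts]) [:: [::]].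

Definition diag_value8 (f u z : seq nat) : nat :=
  sumn [seq (2 ^ nth 0 f i * nth 0 u i * nth 0 z i)%N | i <- iota 0 4].

Definition liftable8 (f z : seq nat) : bool :=
  has (fun i => (nth 0%N f i == 0%N) && (nth 0%N z i == 1%N)) (iota 0 4).

Definition reach8 (f u : seq nat) : seq nat :=
  [seq (diag_value8 f u z %% 8)%N | z <- square_tuples8 & liftable8 f z].

Definition covers8 (R : seq nat) : bool :=
  all (mem R) odd_residues8 &&
  (all (fun r => ((2 * r) %% 8)%N \in R) odd_residues8 || (0%N \in R)).

Definition covers8_all : bool :=
  all (fun f0 => all (fun f1 => all (fun f2 => all (fun f3 =>
    (count (pred1 0%N) [:: f0; f1; f2; f3] < 2)%N ||
    all (fun u0 => all (fun u1 => all (fun u2 => all (fun u3 =>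
      covers8 (reach8 [:: f0; f1; f2; f3] [:: u0; u1; u2; u3])) odd_residues8)
        odd_residues8) odd_residues8) odd_residues8)
  [:: 0%N; 1%N]) [:: 0%N; 1%N]) [:: 0%N; 1%N]) [:: 0%N; 1%N].

Lemma covers8_allT : covers8_all.
Proof. by vm_compute. Qed.

Lemma square_tuples8P z : z \in square_tuples8 -> size z = 4%N /\ all (mem squares8) z.
Proof.
rewrite /square_tuples8; elim: 4%N z => [|k IH] z; first by rewrite inE => /eqP ->.
by rewrite iterS => /allpairsP [[a t] [ha /IH [<- ht] ->]] /=; rewrite ha ht.
Qed.

Definition residue8 (u : int) : nat := `|(u %% 8)%Z|%N.

Lemma residue8E (u : int) : (residue8 u)%:Z = (u %% 8)%Z.
Proof. by rewrite /residue8 gez0_abs ?modz_ge0. Qed.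

Lemma dvdz_sub_residue8 (u : int) : (8 %| u - (residue8 u)%:Z)%Z.
Proof. by rewrite residue8E {1}(divz_eq u 8) addrK dvdz_mull. Qed.

Lemma residue8_odd (u : int) : ~~ (2 %| u)%Z -> residue8 u \in odd_residues8.
Proof.
move=> nu; have h8 : (residue8 u < 8)%N by rewrite -ltz_nat residue8E ltz_pmod.
have h2 : ~~ (2 %| (residue8 u)%:Z)%Z.
  apply: contra nu => h; rewrite -(subrK (residue8 u)%:Z u) rpredD //.
  exact: dvdz_trans (dvdz_sub_residue8 u).
by move: h8 h2; case: (residue8 u) => [|[|[|[|[|[|[|[|]]]]]]]].
Qed.

Definition sqrt8 (x : nat) : nat := if x == 4%N then 2%N else x.

Lemma sqrt8K x : x \in squares8 -> ((sqrt8 x)%:Z) ^+ 2 = x%:Z.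
Proof. by rewrite !inE => /or3P [] /eqP ->. Qed.

Definition exps_seq (f : nat -> bool) : seq nat := [seq nat_of_bool (f i) | i <- iota 0 4].
Definition residues8_seq (u : nat -> int) : seq nat := [seq residue8 (u i) | i <- iota 0 4].

Lemma diag4_value8 f u z : size z = 4%N -> all (mem squares8) z ->
  (8 %| diag4 (pscaled 2 f u) (fun i => (sqrt8 (nth 0%N z i))%:Z)
        - (diag_value8 (exps_seq f) (residues8_seq u) z)%:Z)%Z.
Proof.
move=> sz /allP hz.
rewrite /diag4 /diag_value8 sumnE big_map -natz natr_sum.
rewrite -[iota 0 4]/(index_iota 0 4) big_mkord -sumrB rpred_sum // => -[i /= hi] _.
rewrite /exps_seq /residues8_seq !(nth_map 0%N) ?size_iota ?nth_iota // add0n.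
rewrite sqrt8K; last by apply: hz; rewrite mem_nth ?sz.
rewrite !natrM natrX /pscaled !natz.
have -> : 2%:Z ^+ f i * u i * (nth 0%N z i)%:Z
    - 2%:Z ^+ f i * (residue8 (u i))%:Z * (nth 0%N z i)%:Z
  = (u i - (residue8 (u i))%:Z) * (2%:Z ^+ f i * (nth 0%N z i)%:Z) by ring.
by rewrite dvdz_mulr ?dvdz_sub_residue8.
Qed.

Lemma padic_rep2_reach8 f u c r : (forall i, (i < 4)%N -> ~~ (2 %| u i)%Z) ->
  r \in reach8 (exps_seq f) (residues8_seq u) -> (8 %| c - r%:Z)%Z ->
  padic_rep (diag4 (pscaled 2 f u)) 2 c.
Proof.
move=> hu /mapP [z]; rewrite mem_filter => /andP [/hasP [i]] .
rewrite mem_iota add0n => /= hi /andP [fi zi] /square_tuples8P [sz hz] -> hc.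
pose y i := (sqrt8 (nth 0%N z i))%:Z.
have fi0 : f i = false.
  by move: fi; rewrite /exps_seq (nth_map 0%N) ?size_iota // nth_iota //; case: (f i).
have yi : y i = 1 by rewrite /y (eqP zi).
apply: (@padic_rep_diag4_hensel 2 1 _ y i) => //.
- by rewrite -mulr_natr dvdz_mull.
- rewrite /pscaled fi0 yi mul1r mulr1 -mulr_natr expr2 dvdz_mul2r //.
  exact: hu.
set V := diag_value8 (exps_seq f) (residues8_seq u) z in hc.
have hV : (8 %| V%:Z - (V %% 8)%N%:Z)%Z.
  by have := dvdz_sub_residue8 V%:Z; rewrite residue8E modz_nat.
have -> : diag4 (pscaled 2 f u) y - c =
  (diag4 (pscaled 2 f u) y - V%:Z) + (V%:Z - (V %% 8)%N%:Z) - (c - (V %% 8)%N%:Z) by ring.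
by rewrite rpredB // rpredD // diag4_value8.
Qed.

Lemma covers8_reach8 f u : (forall i, (i < 4)%N -> ~~ (2%:Z %| u i)%Z) ->
  (2 <= size (idx4 (predC f)))%N -> covers8 (reach8 (exps_seq f) (residues8_seq u)).
Proof.
move=> hu hA; have bit b : nat_of_bool b \in [:: 0%N; 1%N] by case: b.
move: covers8_allT => /allP /(_ _ (bit (f 0%N))) /allP /(_ _ (bit (f 1%N)))
  /allP /(_ _ (bit (f 2%N))) /allP /(_ _ (bit (f 3%N))) /orP [].
  move: hA; rewrite /idx4 size_filter /=.
  by case: (f 0%N); case: (f 1%N); case: (f 2%N); case: (f 3%N).
by move=> /allP /(_ _ (residue8_odd (hu 0%N isT))) /allP /(_ _ (residue8_odd (hu 1%N isT)))
  /allP /(_ _ (residue8_odd (hu 2%N isT))) /allP /(_ _ (residue8_odd (hu 3%N isT))).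
Qed.

Lemma padic_rep_pscaled_two f u tau : (forall i, (i < 4)%N -> ~~ (2%:Z %| u i)%Z) ->
  (2 <= size (idx4 (predC f)))%N -> ~~ (2%:Z %| tau)%Z ->
  padic_rep (diag4 (pscaled 2 f u)) 2 (2%:Z ^+ 2 * tau) /\
  padic_rep (diag4 (pscaled 2 f u)) 2 (2%:Z ^+ 3 * tau).
Proof.
move=> hu hA ht.
have /andP [hodd h2] := covers8_reach8 hu hA.
have hr := residue8_odd ht.
have R1 : padic_rep (diag4 (pscaled 2 f u)) 2 tau.
  exact: (padic_rep2_reach8 hu (allP hodd _ hr) (dvdz_sub_residue8 tau)).
split; first exact: padic_rep_diag4_sqr.
case/orP: h2 => [h2 | h0]; last first.
  by apply: (padic_rep2_reach8 hu h0); rewrite subr0 dvdz_mulr.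
have R2 : padic_rep (diag4 (pscaled 2 f u)) 2 (2%:Z * tau).
  apply: (padic_rep2_reach8 hu (allP h2 _ hr)).
  have -> : 2%:Z * tau - ((2 * residue8 tau) %% 8)%N%:Z =
    2%:Z * (tau - (residue8 tau)%:Z) +
    ((2 * residue8 tau)%N%:Z - ((2 * residue8 tau) %% 8)%N%:Z) by rewrite PoszM; ring.
  rewrite rpredD ?dvdz_mull ?dvdz_sub_residue8 //.
  by have := dvdz_sub_residue8 (2 * residue8 tau)%N%:Z; rewrite residue8E modz_nat.
by have := padic_rep_diag4_sqr 2%:Z R2; rewrite mulrA -exprSr.
Qed.

Lemma padic_rep_pscaled p f u tau : prime p ->
  (forall i, (i < 4)%N -> ~~ (p%:Z %| u i)%Z) ->
  (2 <= size (idx4 (predC f)))%N -> ~~ (p%:Z %| tau)%Z ->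
  padic_rep (diag4 (pscaled p f u)) p (p%:Z ^+ 2 * tau) /\
  padic_rep (diag4 (pscaled p f u)) p (p%:Z ^+ 3 * tau).
Proof.
move=> pp; have [-> | po] := even_prime pp; first exact: padic_rep_pscaled_two.
exact: padic_rep_pscaled_odd.
Qed.

Lemma exists_exponent_of_parity (b : bool) (me m : nat) : (me + 3 <= m)%N ->
  exists E, [/\ odd E = b, (me <= E)%N & m = (E + 2)%N \/ m = (E + 3)%N].
Proof.
move=> hm; have [h | h] := eqVneq (odd (m - 2)) b.
  by exists (m - 2)%N; split=> //; [lia | left; lia].
exists (m - 3)%N; split; [|lia | right; lia].
have e : (m - 2 = (m - 3).+1)%N by lia.
by move: h; rewrite e /=; case: b; case: odd.
Qed.

Lemma subn_half_double a b : (a <= b)%N -> odd a = odd b -> b = (a + 2 * (b - a)./2)%N.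
Proof.
move=> ab eo; have ho : ~~ odd (b - a) by rewrite oddB // eo addbb.
have := even_halfK ho; rewrite -muln2; lia.
Qed.

Lemma diag4_zero d : diag4 d (fun=> 0) = 0.
Proof. by rewrite diag4E expr0n /= !mulr0 !addr0. Qed.

Lemma padic_rep_diag4_pfactor_multiples p d : prime p ->
  (forall i, (i < 4)%N -> d i != 0) ->
  exists N, forall T : int, (p%:Z ^+ N %| T)%Z -> padic_rep (diag4 d) p T.
Proof.
move=> pp hd.
pose e i := logn p `|d i|.
pose u i := (d i %/ p%:Z ^+ e i)%Z.
have hdu i : (i < 4)%N -> d i = p%:Z ^+ e i * u i /\ ~~ (p%:Z %| u i)%Z.
  by move=> hi; apply: pfactorz_decomp => //; apply: hd.
pose me := (\max_(i < 4) e i)%N.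
have hei i : (i < 4)%N -> (e i <= me)%N.
  by move=> hi; apply: (leq_bigmax_cond (F := fun j : 'I_4 => e j) (Ordinal hi)).
exists (me + 3)%N => T hT.
have [-> | T0] := eqVneq T 0; first exact: (padic_rep0 _ (diag4_zero d)).
move: hT (pfactorz_decomp pp T0); rewrite dvdz_pfactorE //.
move: (logn p `|T|) => m; move: (T %/ p%:Z ^+ m)%Z => tau hm [-> ht].
(* T = p ^ E * p ^ (2 or 3) * tau with E of the parity of at least two of the e i *)
have [b hb] := idx4_parity (fun i => odd (e i)).
have [E [hEb hE hmE]] := exists_exponent_of_parity b hm.
pose f i := odd (e i) != b.
have hk i : (i < 4)%N -> (E + f i = e i + 2 * (E + f i - e i)./2)%N.
  move=> hi; apply: subn_half_double; first by have := hei i hi; lia.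
  by rewrite oddD hEb /f; case: (odd (e i)); case: (b).
have hA : (2 <= size (idx4 (predC f)))%N.
  by rewrite /idx4 (eq_filter (a2 := fun i => odd (e i) == b)) // => i; rewrite /= negbK.
have hsc c : padic_rep (diag4 (pscaled p f u)) p c -> padic_rep (diag4 d) p (p%:Z ^+ E * c).
  apply: (padic_rep_diag4_scale (s := fun i => p%:Z ^+ (E + f i - e i)./2)) => i hi.
  by rewrite /pscaled {1}(hdu i hi).1 -exprM mulrAC -exprD mulnC -hk // exprD mulrA.
have [R2 R3] := padic_rep_pscaled pp (fun i hi => (hdu i hi).2) hA ht.
by case: hmE => ->; rewrite exprD -mulrA; apply: hsc.
Qed.

(** * Lattices *)

Section BilinearForm.

Variables (n : nat) (G : 'M[int]_n).

Definition bform (x y : 'cV[int]_n) : int := (x^T *m G *m y) 0 0.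

Lemma qformE x : qform G x = bform x x. Proof. by []. Qed.

Lemma bform0l y : bform 0 y = 0.
Proof. by rewrite /bform linear0 !mul0mx mxE. Qed.

Lemma bform0r x : bform x 0 = 0.
Proof. by rewrite /bform mulmx0 mxE. Qed.

Lemma bformDl x y z : bform (x + y) z = bform x z + bform y z.
Proof. by rewrite /bform linearD /= !mulmxDl mxE. Qed.

Lemma bformDr x y z : bform z (x + y) = bform z x + bform z y.
Proof. by rewrite /bform !mulmxDr mxE. Qed.

Lemma bformZl a x z : bform (a *: x) z = a * bform x z.
Proof. by rewrite /bform linearZ /= -!scalemxAl mxE. Qed.

Lemma bformZr a x z : bform z (a *: x) = a * bform z x.
Proof. by rewrite /bform -!scalemxAr mxE. Qed.

Lemma bformBl x y z : bform (x - y) z = bform x z - bform y z.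
Proof. by rewrite bformDl -scaleN1r bformZl mulN1r. Qed.

Lemma bform_suml I (r : seq I) (P : pred I) (x : I -> 'cV[int]_n) y :
  bform (\sum_(i <- r | P i) x i) y = \sum_(i <- r | P i) bform (x i) y.
Proof. exact: (big_morph (bform^~ y) (fun a b => bformDl a b y) (bform0l y)). Qed.

Lemma bform_sumr I (r : seq I) (P : pred I) (x : I -> 'cV[int]_n) y :
  bform y (\sum_(i <- r | P i) x i) = \sum_(i <- r | P i) bform y (x i).
Proof. exact: (big_morph (bform y) (fun a b => bformDr a b y) (bform0r y)). Qed.

Hypothesis sG : symmetric_gram G.

Lemma bformC x y : bform x y = bform y x.
Proof.
rewrite /bform -[in LHS](trmxK (x^T *m G *m y)) mxE.
by rewrite !trmx_mul trmxK sG mulmxA.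
Qed.

Lemma qform_orthogonal_sum k (V : nat -> 'cV[int]_n) (z : nat -> int) :
  (forall i j, (i < k)%N -> (j < k)%N -> i != j -> bform (V i) (V j) = 0) ->
  qform G (\sum_(i < k) z i *: V i) = \sum_(i < k) bform (V i) (V i) * z i ^+ 2.
Proof.
move=> ho; rewrite qformE bform_suml; apply: eq_bigr => i _.
rewrite bform_sumr (bigD1 i) //= big1 ?addr0 => [|j ji].
  by rewrite bformZl bformZr; ring.
by rewrite bformZl bformZr ho ?mulr0 // eq_sym.
Qed.

End BilinearForm.

Section GramSchmidt.

Variables (n : nat) (G : 'M[int]_n).
Hypotheses (sG : symmetric_gram G) (pd : pos_def G).

Definition unitv (k : nat) : 'cV[int]_n := \col_r ((r == k :> nat)%:R).

(* Gram-Schmidt step scaled by Q(v), so that it stays in the lattice *)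
Definition orth_step (v w : 'cV[int]_n) : 'cV[int]_n :=
  bform G v v *: w - bform G w v *: v.

Lemma bform_orth_step v w : bform G (orth_step v w) v = 0.
Proof. by rewrite /orth_step bformBl !bformZl mulrC subrr. Qed.

Lemma bform_orth_step_eq0 v w u :
  bform G w u = 0 -> bform G v u = 0 -> bform G (orth_step v w) u = 0.
Proof. by move=> h1 h2; rewrite /orth_step bformBl !bformZl h1 h2 !mulr0 subrr. Qed.

Definition orth_reduce (V : nat -> 'cV[int]_n) (l : seq nat) (w : 'cV[int]_n) :=
  foldr (fun i w => orth_step (V i) w) w l.

Definition orth_triangular (V : nat -> 'cV[int]_n) (k : nat) : Prop :=
  forall i, (i < k)%N -> [/\ V i != 0, forall r : 'I_n, (i < r)%N -> V i r ord0 = 0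
                          & forall j, (j < i)%N -> bform G (V i) (V j) = 0].

Lemma orth_triangular_orth V k : orth_triangular V k ->
  forall i j, (i < k)%N -> (j < k)%N -> i != j -> bform G (V i) (V j) = 0.
Proof.
move=> hV i j hi hj; rewrite neq_ltn => /orP [ij | ji]; last by have [_ _ ->] := hV i hi.
by rewrite bformC //; have [_ _ ->] := hV j hj.
Qed.

Lemma orth_reduce_unitv_spec V k l : orth_triangular V k -> uniq l -> all (gtn k) l ->
  let w := orth_reduce V l (unitv k) in
  (forall r : 'I_n, (k <= r)%N ->
     w r ord0 = (\prod_(i <- l) bform G (V i) (V i)) * (r == k :> nat)%:R) /\
  (forall j, j \in l -> bform G w (V j) = 0).
Proof.
move=> hV; elim: l => [|a l IH] /=.
  by split=> [r _|//]; rewrite big_nil mul1r mxE.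
case/andP=> al ul /andP [ak lk]; have [IHr IHo] := IH ul lk.
split=> [r kr | j].
  have [_ Va _] := hV a ak.
  rewrite /orth_step !mxE IHr // Va ?(leq_trans ak) // mulr0 subr0 big_cons.
  by rewrite mulrA.
rewrite inE => /predU1P [-> | jl]; first exact: bform_orth_step.
apply: bform_orth_step_eq0; first exact: IHo.
apply: (orth_triangular_orth hV) => //; first by move/allP: lk; apply.
by apply: contraNneq al => ->.
Qed.

Lemma orth_triangular_ext V k : (k < n)%N -> orth_triangular V k ->
  orth_triangular (fun i => if i == k then orth_reduce V (iota 0 k) (unitv k) else V i) k.+1.
Proof.
move=> kn hV i; rewrite ltnS leq_eqVlt => /predU1P [-> | ik]; last first.
  rewrite (ltn_eqF ik); have [V0 Vr Vo] := hV i ik.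
  by split=> // j ji; rewrite (ltn_eqF (ltn_trans ji ik)) Vo.
have lk : all (gtn k) (iota 0 k) by apply/allP => j; rewrite mem_iota.
have [hr ho] := orth_reduce_unitv_spec hV (iota_uniq 0 k) lk.
rewrite eqxx; split.
- apply/negP => /eqP w0; have := hr (Ordinal kn) (leqnn k).
  rewrite w0 mxE eqxx mulr1 => /esym /eqP; apply/negP.
  rewrite prodf_seq_neq0; apply/allP => j; rewrite mem_iota => /= jk.
  by have [V0 _ _] := hV j jk; rewrite gt_eqF // pd.
- by move=> r kr; rewrite hr 1?ltnW // gtn_eqF ?mulr0.
- by move=> j jk; rewrite (ltn_eqF jk) ho // mem_iota.
Qed.

Lemma exists_orth_triangular k : (k <= n)%N -> exists V, orth_triangular V k.
Proof.
elim: k => [_ | k IH kn]; first by exists (fun=> 0).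
have [V hV] := IH (ltnW kn).
by exists (fun i => if i == k then orth_reduce V (iota 0 k) (unitv k) else V i);
  apply: orth_triangular_ext.
Qed.

Lemma exists_orthogonal_family k : (k <= n)%N ->
  exists V : nat -> 'cV[int]_n,
    (forall i, (i < k)%N -> 0 < bform G (V i) (V i)) /\
    (forall i j, (i < k)%N -> (j < k)%N -> i != j -> bform G (V i) (V j) = 0).
Proof.
move=> kn; have [V hV] := exists_orth_triangular kn.
exists V; split; last exact: orth_triangular_orth.
by move=> i ik; have [V0 _ _] := hV i ik; apply: pd.
Qed.

End GramSchmidt.

Lemma loc_repr_diag4 n (G : 'M[int]_n) (V : nat -> 'cV[int]_n) p c : symmetric_gram G ->
  (forall i j, (i < 4)%N -> (j < 4)%N -> i != j -> bform G (V i) (V j) = 0) ->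
  padic_rep (diag4 (fun i => bform G (V i) (V i))) p c -> loc_repr G p c.
Proof.
move=> sG ho R; apply/loc_reprE => k; have [z hz] := R k.
by exists (\sum_(i < 4) z i *: V i); rewrite qform_orthogonal_sum.
Qed.

Lemma pos_def_det_neq0 n (G : 'M[int]_n) : pos_def G -> \det G != 0.
Proof.
move=> pd; apply/negP => /det0P [v v0 hv].
have x0 : v^T != 0 by apply: contra v0 => /eqP h; rewrite -[v]trmxK h linear0.
by have := pd _ x0; rewrite /qform trmxK hv mul0mx mxE ltxx.
Qed.

Lemma cV_pfactor_primitive n p (x : 'cV[int]_n) : prime p -> x != 0 ->
  exists j y r, x = p%:Z ^+ j *: y /\ ~~ (p%:Z %| y r ord0)%Z.
Proof.
move=> pp x0.
pose P j := [exists r, ~~ (p%:Z ^+ j.+1 %| x r ord0)%Z].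
have exP : exists j, P j.
  have /existsP [r xr] : [exists r, x r ord0 != 0].
    apply: contraNT x0; rewrite negb_exists => /forallP h; apply/eqP/matrixP => r c.
    by rewrite (ord1 c) mxE; apply/eqP; rewrite -[_ == 0]negbK h.
  exists (logn p `|x r ord0|); apply/existsP; exists r.
  by rewrite dvdz_pfactorE // ltnn.
case: (ex_minnP exP) => j /existsP [r hr] minj.
have hj s : (p%:Z ^+ j %| x s ord0)%Z.
  case: j hr minj => [|j] hr minj; first by rewrite expr0 dvd1z.
  have : ~~ P j by apply/negP => /minj; rewrite ltnn.
  by rewrite /P negb_exists => /forallP /(_ s); rewrite negbK.
exists j, (\col_s (x s ord0 %/ p%:Z ^+ j)%Z), r; split.
  by apply/matrixP => s c; rewrite !mxE (ord1 c) mulrC divzK.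
rewrite mxE; apply: contra hr => h.
by rewrite exprS -(divzK (hj r)) dvdz_mul.
Qed.

Section Periodicity.

Variables (n : nat) (G : 'M[int]_n).
Hypotheses (sG : symmetric_gram G) (dG : \det G != 0).

Lemma bform_unitv x (i : 'I_n) : bform G x (unitv n i) = (x^T *m G) 0 i.
Proof.
have -> : unitv n i = delta_mx i 0.
  by apply/matrixP => r c; rewrite !mxE (ord1 c) eqxx andbT.
by rewrite /bform -colE mxE.
Qed.

Lemma qform_add_unitv x (i : 'I_n) h :
  qform G (x + h *: unitv n i) =
  qform G x + (bform G x (unitv n i) *+ 2) * h + qform G (unitv n i) * h ^+ 2.
Proof.
by rewrite !qformE !bformDl !bformDr !bformZl !bformZr (bformC sG (unitv n i) x) mulr2n; ring.
Qed.

(* Cramer's rule: det G * x = (x^T G) adj G *)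
Lemma dvdz_det_mul_coord (x : 'cV[int]_n) (P : int) :
  (forall i : 'I_n, (P %| bform G x (unitv n i))%Z) -> forall r, (P %| \det G * x r ord0)%Z.
Proof.
move=> h r.
have e : x^T *m G *m \adj G = \det G *: x^T by rewrite -mulmxA mul_mx_adj mul_mx_scalar.
have := congr1 (fun M : 'M[int]_(1, n) => M ord0 r) e; rewrite [in RHS]mxE [x^T _ _]mxE mxE => <-.
by apply: rpred_sum => s _; rewrite dvdz_mulr // -bform_unitv.
Qed.

Lemma exists_bform_unitv_ndvd p (y : 'cV[int]_n) r : prime p -> ~~ (p%:Z %| y r ord0)%Z ->
  exists i : 'I_n, ~~ (p%:Z ^+ (logn p `|\det G|).+1 %| bform G y (unitv n i))%Z.
Proof.
move=> pp ny.
suff /existsP [i hi] :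
    [exists i : 'I_n, ~~ (p%:Z ^+ (logn p `|\det G|).+1 %| bform G y (unitv n i))%Z].
  by exists i.
rewrite -negb_forall; apply/negP => /forallP h.
have := dvdz_det_mul_coord h r; have [eD nD] := pfactorz_decomp pp dG.
move: eD nD; set dl := logn p _; set D' := (_ %/ _)%Z => -> nD.
rewrite -mulrA exprSr dvdz_mul2l ?expf_neq0 -?lt0n ?prime_gt0 //.
by apply/negP; apply: prime_ndvdzM.
Qed.

Lemma loc_repr_hensel p x (i : 'I_n) c : prime p -> bform G x (unitv n i) != 0 ->
  (p%:Z ^+ (2 * logn p `|bform G x (unitv n i) *+ 2|).+1 %| qform G x - c)%Z ->
  loc_repr G p c.
Proof.
move=> pp B0 hx; have beta0 : bform G x (unitv n i) *+ 2 != 0.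
  by rewrite -mulr_natr mulf_neq0.
apply/loc_reprE; apply: (padic_rep_line (f := fun h => x + h *: unitv n i) pp _ _ _ hx).
- by move=> h; rewrite qform_add_unitv.
- by rewrite dvdz_pfactorE.
- by rewrite dvdz_pfactorE // ltnn.
Qed.

Lemma exists_unitv_gradient_small p x : prime p -> x != 0 ->
  exists j (i : 'I_n), [/\ (p%:Z ^+ (2 * j) %| qform G x)%Z, bform G x (unitv n i) != 0
    & (logn p `|bform G x (unitv n i) *+ 2| <= j + logn p `|\det G| + 1)%N].
Proof.
move=> pp x0; have [j [y [r [-> ny]]]] := cV_pfactor_primitive pp x0.
have [i hi] := exists_bform_unitv_ndvd pp ny.
have B0 : bform G y (unitv n i) != 0 by apply: contraNneq hi => ->; rewrite dvdz0.
have pj0 : p%:Z ^+ j != 0 by rewrite expf_neq0 // -lt0n prime_gt0.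
exists j, i; rewrite qformE !bformZl !bformZr mulrA -exprD addnn -mul2n dvdz_mulr //.
split=> //; first by rewrite mulf_neq0.
have p0 := prime_gt0 pp.
rewrite -mulr_natr -mulrA natz abszM abszX lognM ?expn_gt0 ?p0 ?absz_gt0 ?mulf_neq0 //.
rewrite pfactorK // abszM lognM ?absz_gt0 // [`|2%:Z|%N]/=.
move: hi; rewrite dvdz_pfactorE // -ltnNge ltnS; have := logn_two_le1 pp.
by move: (logn p 2) (logn p `|_|) (logn p `|\det G|) => u v w; clear; lia.
Qed.

Lemma loc_repr_periodic p NB (b b' : int) : prime p ->
  (forall T, (p%:Z ^+ NB %| T)%Z -> loc_repr G p T) ->
  (p%:Z ^+ (NB + 2 * logn p `|\det G| + 4) %| b - b')%Z -> loc_repr G p b -> loc_repr G p b'.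
Proof.
move=> pp hL; set N := (NB + _ + 4)%N => hbb hb.
have hNB : (p%:Z ^+ NB %| p%:Z ^+ N)%Z by rewrite dvdz_exp2l // /N; lia.
have [hb0 | nb0] := boolP (p%:Z ^+ NB %| b)%Z.
  apply: hL; have -> : b' = b - (b - b') by ring.
  by rewrite rpredB // (dvdz_trans hNB).
have [x hx] := (iffLR (loc_reprE _ _ _) hb) N.
have x0 : x != 0.
  apply: contra nb0 => /eqP x0; move: hx; rewrite x0 qformE bform0l sub0r rpredN.
  exact: dvdz_trans.
have [j [i [hQ B0 ht]]] := exists_unitv_gradient_small pp x0.
(* Q x is divisible by p ^ (2 j) and congruent to b modulo p ^ NB *)
have h2j : (2 * j < NB)%N.
  rewrite ltnNge; apply: contra nb0 => hle.
  have -> : b = qform G x - (qform G x - b) by ring.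
  rewrite rpredB //; [exact: dvdz_trans (dvdz_exp2l p%:Z hle) hQ | exact: dvdz_trans hNB hx].
apply: (loc_repr_hensel pp B0).
have -> : qform G x - b' = (qform G x - b) + (b - b') by ring.
have hN : (p%:Z ^+ (2 * logn p `|bform G x (unitv n i) *+ 2|).+1 %| p%:Z ^+ N)%Z.
  rewrite dvdz_exp2l // /N; move: ht h2j.
  by move: (logn p _) (logn p `|\det G|) => u v; clear; lia.
by rewrite rpredD // (dvdz_trans hN).
Qed.

End Periodicity.

(** * The exceptional set *)

Lemma exists_filter_prop (T : eqType) (A : T -> Prop) (l : seq T) :
  exists s : seq T, forall x, x \in s <-> x \in l /\ A x.
Proof.
elim: l => [|a l [s hs]]; first by exists [::] => x; rewrite in_nil; split=> // [[]].
have [ha | ha] := classic (A a); [exists (a :: s) | exists s] => x; rewrite !inE.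
  split=> [/predU1P [-> | /hs [xl ax]] | [/predU1P [-> _ | xl ax]]].
  - by rewrite eqxx.
  - by rewrite xl orbT.
  - by rewrite eqxx.
  - by apply/orP; right; apply/hs.
split=> [/hs [xl ax] | [/predU1P [-> /ha // | xl ax]]]; first by rewrite xl orbT.
exact/hs.
Qed.

Section ExceptionalSet.

Variables (rep : nat -> int -> Prop) (P : seq nat) (N : nat).
Hypotheses (P_prime : forall p, p \in P -> prime p)
  (rep0 : forall p, p \in P -> rep p 0)
  (rep_off : forall p c, prime p -> p \notin P -> rep p c)
  (rep_periodic : forall p, p \in P ->
     forall b b', (p%:Z ^+ N %| b - b')%Z -> rep p b -> rep p b').

Lemma rep_modn p (b : nat) : p \in P -> rep p b%:Z <-> rep p (b %% p ^ N)%N%:Z.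
Proof.
move=> hp; have hd : (p%:Z ^+ N %| b%:Z - (b %% p ^ N)%N%:Z)%Z.
  by rewrite {1}(divn_eq b (p ^ N)) PoszD addrK PoszM PoszX dvdz_mull.
by split; apply: rep_periodic; rewrite // -opprB rpredN.
Qed.

Lemma rep_allP (b : nat) :
  (forall p, prime p -> rep p b%:Z) <-> forall p, p \in P -> rep p (b %% p ^ N)%N%:Z.
Proof.
split=> h p hp; first by apply/(rep_modn b hp); apply/h/P_prime.
have [hP | nP] := boolP (p \in P); last exact: rep_off.
by apply/(rep_modn b hP); apply: h.
Qed.

Definition residue_candidates : seq (nat * nat) :=
  [seq (p, r) | p <- P, r <- iota 1 (p ^ N).-1].

Lemma residue_candidatesP p r :
  (p, r) \in residue_candidates <-> [/\ p \in P, (0 < r)%N & (r < p ^ N)%N].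
Proof.
have pN q : q \in P -> (0 < q ^ N)%N by move=> hq; rewrite expn_gt0 prime_gt0 ?P_prime.
split=> [/allpairsPdep [q [r' [hq + [-> ->]]]] | [hp r0 rN]].
  by rewrite mem_iota => /andP [r1 r2]; move: (pN q hq) => qN; split=> //; lia.
rewrite /residue_candidates; apply/allpairsPdep; exists p, r.
by rewrite mem_iota; move: (pN p hp) => pN'; split=> //; lia.
Qed.

Lemma exceptional_set_union_AP : exists s : seq (nat * nat),
  (forall am, am \in s -> [/\ (0 < am.1)%N, (am.1 < am.2)%N & admissible am.1 am.2]) /\
  (forall b : nat,
     ~ (forall p, prime p -> rep p b%:Z) <-> exists2 am, am \in s & in_AP am.1 am.2 b).
Proof.
have [s hs] := exists_filter_prop (fun pr : nat * nat => ~ rep pr.1 pr.2%:Z) residue_candidates.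
exists [seq (pr.2, (pr.1 ^ N)%N) | pr <- s].
split=> [_ /mapP [[p r] /hs [/residue_candidatesP [hp r0 rN] nr] ->] | b] /=.
  have pp := P_prime hp; split=> // q pq.
  rewrite Euclid_dvdX // dvdn_prime2 // => /andP [/eqP -> _].
  rewrite pfactorK // ltnNge; apply: contra_notN nr => hN.
  apply/(rep_modn _ hp); have /eqP -> : (r %% p ^ N == 0)%N by rewrite -/(dvdn _ _) pfactor_dvdn.
  exact: rep0.
rewrite rep_allP; split.
  move=> /(@not_all_ex_not _ _) [p]; have [hp | nP] := boolP (p \in P); last first.
    by move=> h; exfalso; apply: h.
  move=> nr; have {}nr : ~ rep p (b %% p ^ N)%N%:Z by move=> h; apply: nr.
  set r := (b %% p ^ N)%N in nr.
  have pN : (0 < p ^ N)%N by rewrite expn_gt0 prime_gt0 ?P_prime.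
  exists (r, (p ^ N)%N); last by exists (b %/ p ^ N)%N; rewrite /= addnC mulnC -divn_eq.
  apply/mapP; exists (p, r) => //; apply/hs; split=> //; apply/residue_candidatesP.
  split=> //; last by rewrite ltn_pmod.
  by rewrite lt0n; apply: contra_notN nr => /eqP ->; apply: rep0.
case=> _ /mapP [[p r] /hs [/residue_candidatesP [hp r0 rN] nr] ->] /= [x ->] h.
by apply: nr; have := h p hp; rewrite addnC mulnC modnMDl modn_small.
Qed.

End ExceptionalSet.

Lemma exists_common_index (P : seq nat) (A : nat -> nat -> Prop) :
  (forall p N N', (N <= N')%N -> A p N -> A p N') ->
  (forall p, p \in P -> exists N, A p N) -> exists N, forall p, p \in P -> A p N.
Proof.
move=> Aup; elim: P => [|q P IH] hP; first by exists 0%N.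
have [N1 h1] := hP q (mem_head q P).
have [N2 h2] := IH (fun p hp => hP p (@mem_behead _ (q :: P) p hp)).
exists (maxn N1 N2) => p /predU1P [-> | hp]; first by apply: Aup h1; apply: leq_maxl.
by apply: Aup (h2 p hp); apply: leq_maxr.
Qed.

Section PositiveLattice.

Variables (n : nat) (G : 'M[int]_n).
Hypotheses (hn : (4 <= n)%N) (sG : symmetric_gram G) (pd : pos_def G).

Lemma loc_repr_universal_almost_all :
  exists2 D : nat, (0 < D)%N & forall p c, prime p -> ~~ (p %| D)%N -> loc_repr G p c.
Proof.
have [V [hpos ho]] := exists_orthogonal_family sG pd hn.
have d0 i : (i < 4)%N -> bform G (V i) (V i) != 0 by move=> hi; rewrite gt_eqF ?hpos.
set d := bform G (V 0%N) (V 0%N) * bform G (V 1%N) (V 1%N) * bform G (V 2%N) (V 2%N).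
exists (2 * `|d|)%N; first by rewrite muln_gt0 absz_gt0 !mulf_neq0 ?d0.
move=> p c pp; rewrite Euclid_dvdM // negb_or => /andP [n2 nd].
have po : odd p by have [p2 | //] := even_prime pp; rewrite p2 dvdnn in n2.
move: nd; rewrite !abszM !Euclid_dvdM // !negb_or => /andP [/andP [nd0 nd1] nd2].
apply: (loc_repr_diag4 sG ho).
by apply: (padic_rep_diag4_ternary pp po (i := 0) (j := 1) (l := 2)); rewrite ?dvdzE.
Qed.

Lemma loc_repr_periodic_exponent p : prime p -> exists N, forall b b' : int,
  (p%:Z ^+ N %| b - b')%Z -> loc_repr G p b -> loc_repr G p b'.
Proof.
move=> pp; have [V [hpos ho]] := exists_orthogonal_family sG pd hn.
have [NB hNB] := padic_rep_diag4_pfactor_multiples pp (fun i hi => lt0r_neq0 (hpos i hi)).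
exists (NB + 2 * logn p `|\det G| + 4)%N => b b'.
apply: (loc_repr_periodic sG (pos_def_det_neq0 pd) pp) => T hT.
by apply: (loc_repr_diag4 sG ho); apply: hNB.
Qed.

End PositiveLattice.

Lemma loc_repr0 n (G : 'M[int]_n) p : loc_repr G p 0.
Proof. by apply/loc_reprE; apply: (@padic_rep0 _ (qform G) p 0); apply: bform0l. Qed.

Unset Implicit Arguments.
Theorem proposition1 (n : nat) (G : 'M[int]_n) :
  (4 <= n)%N -> symmetric_gram G -> pos_def G -> scale_one G ->
  exists s : seq (nat * nat),
    (forall am, am \in s ->
       [/\ (0 < am.1)%N, (am.1 < am.2)%N & admissible am.1 am.2]) /\
    (forall b : nat, (0 < b)%N ->
       (~ in_Q_gen G (b%:Z) <->
        exists2 am, am \in s & in_AP am.1 am.2 b)).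
Proof.
move=> hn sG pd _.
have [D D0 hD] := loc_repr_universal_almost_all hn sG pd.
have [N hN] : exists N, forall p, p \in primes D -> forall b b' : int,
    (p%:Z ^+ N %| b - b')%Z -> loc_repr G p b -> loc_repr G p b'.
  apply: exists_common_index => [p N N' le h b b' hb | p].
    by apply: h; apply: dvdz_trans hb; rewrite dvdz_exp2l.
  by rewrite mem_primes => /andP [pp _]; apply: loc_repr_periodic_exponent.
have primesD p : p \in primes D -> prime p by rewrite mem_primes => /andP [].
have offD p c : prime p -> p \notin primes D -> loc_repr G p c.
  by move=> pp; rewrite mem_primes pp D0 /=; apply: hD.
have [s [hs hsb]] := exceptional_set_union_AP primesD (fun p _ => loc_repr0 G p) offD hN.
by exists s; split=> // b _; apply: hsb.
Qed.
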